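(* There exist five nonzero vectors $\{\phi_i\}_{i=1}^5$ in $\mathbb R^3$ which fail to do phase retrieval, but whose induced hyperplanes $\{\phi_i^\perp\}_{i=1}^5$ do phase retrieval on $\mathbb R^3$.
   Context: A family of vectors $\{\phi_i\}$ in $\mathbb R^d$ does phase retrieval if $|\langle x,\phi_i\rangle|=|\langle y,\phi_i\rangle|$ for all $i$ implies $x=\pm y$. A family of subspaces $\{W_i\}$ with orthogonal projections $P_i$ does phase retrieval if $\|P_ix\|=\|P_iy\|$ for all $i$ implies $x=\pm y$. Here $\phi_i^\perp=\{x\in\mathbb R^3:\langle x,\phi_i\rangle=0\}$. *)

From mathcomp Require Import all_boot all_order all_algebra.
From mathcomp Require Import reals.
Set Implicit Arguments. Unset Strict Implicit. Unset Printing Implicit Defensive.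
Import Order.TTheory GRing.Theory Num.Theory.
Local Open Scope ring_scope.

Section PR.
Variable R : realType.
Variable d : nat.
Notation vec := 'rV[R]_d.

Definition dotv (x y : vec) : R := \sum_(k < d) x ord0 k * y ord0 k.
Definition normv (x : vec) : R := Num.sqrt (dotv x x).

Definition vec_phase_retrieval (I : finType) (phi : I -> vec) : Prop :=
  forall x y : vec, (forall i, `|dotv x (phi i)| = `|dotv y (phi i)|) ->
    x = y \/ x = - y.

Definition is_orth_proj (W : vec -> Prop) (P : vec -> vec) : Prop :=
  forall x, W (P x) /\ (forall w, W w -> dotv (x - P x) w = 0).

(* Subspace phase retrieval, with P_i the orthogonal projections onto W_i;
   we also require the projections to exist so the notion is not vacuous. *)
Definition subspace_phase_retrieval (I : finType) (W : I -> vec -> Prop) : Prop :=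
  (exists P : I -> vec -> vec, forall i, is_orth_proj (W i) (P i)) /\
  forall P : I -> vec -> vec, (forall i, is_orth_proj (W i) (P i)) ->
    forall x y : vec, (forall i, normv (P i x) = normv (P i y)) ->
      x = y \/ x = - y.

Definition perp (phi : vec) : vec -> Prop := fun x => dotv x phi = 0.

End PR.

From mathcomp Require Import all_boot all_order all_algebra.
From mathcomp Require Import reals.
From mathcomp Require Import ring lra.
Import Order.TTheory GRing.Theory Num.Theory.
Set Implicit Arguments. Unset Strict Implicit. Unset Printing Implicit Defensive.
Local Open Scope ring_scope.

(* For phi <> 0 one has |P x|^2 = |x|^2 - <x,phi>^2/|phi|^2 for the projection P
   onto phi^perp, so equal projection norms on phi^perp say that the quadratic
   form of A = x^T x - y^T y takes the value |phi|^2 tr A at phi.  For the five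
   chosen phi this linear system forces A = (tr A) diag(-5/3, 5/3, 1).  But A has
   rank at most 2, so 0 = det A = -(25/9) (tr A)^3; hence A = 0, i.e.
   x^T x = y^T y, and x = +-y.  The vectors themselves do not do phase retrieval:
   (2,0,0) and (0,1,0) have inner products of equal modulus with all of them. *)

Lemma outer_rowE (R : pzRingType) n (x : 'rV[R]_n) i j : (x^T *m x) i j = x 0 i * x 0 j.
Proof. by rewrite !mxE big_ord1 mxE. Qed.

Lemma outer_subE (R : pzRingType) n (x y : 'rV[R]_n) i j :
  (x^T *m x - y^T *m y) i j = x 0 i * x 0 j - y 0 i * y 0 j.
Proof. by rewrite !mxE !big_ord1 !mxE. Qed.

Lemma outer_row_inj (F : idomainType) n (x y : 'rV[F]_n) :
  x^T *m x = y^T *m y -> x = y \/ x = - y.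
Proof.
move=> /matrixP exy; have {}exy i j : x 0 i * x 0 j = y 0 i * y 0 j.
  by have := exy i j; rewrite !outer_rowE.
case: (pickP (fun k => x 0 k != 0)) => [k /= xk_neq0 | x0]; last first.
  have x_eq0 : x = 0 by apply/rowP => k; rewrite mxE; apply/eqP/negbFE/x0.
  left; rewrite x_eq0; apply/esym/rowP => k; rewrite mxE.
  by apply/eqP; rewrite -sqrf_eq0 expr2 -exy x_eq0 mxE mul0r.
have /eqP := exy k k; rewrite -!expr2 eqf_sqr => /orP[] /eqP ykE; [left|right];
  apply/rowP => j; rewrite ?mxE; apply: (mulIf xk_neq0); rewrite exy.
- by rewrite -ykE.
- by rewrite ykE mulrN mulNr opprK.
Qed.

Lemma rank_outer_sub (F : fieldType) n (x y : 'rV[F]_n) :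
  (\rank (x^T *m x - y^T *m y)%R <= 2)%N.
Proof.
apply: leq_trans (mxrank_add _ _) _; rewrite mxrank_opp.
rewrite -[2%N]/(1 + 1)%N; apply: leq_add;
  by apply: leq_trans (mxrankM_maxr _ _) (rank_leq_row _).
Qed.

Lemma det_outer_sub (F : fieldType) n (x y : 'rV[F]_n.+3) :
  \det (x^T *m x - y^T *m y) = 0.
Proof.
apply/eqP; have := rank_outer_sub x y; apply: contraTT => det_neq0.
by rewrite mxrank_unit ?unitmxE ?unitfE.
Qed.

Section InnerProduct.
Variables (R : realType) (d : nat).
Implicit Types (x y w phi : 'rV[R]_d) (A : 'M[R]_d).

Lemma dotvC x y : dotv x y = dotv y x.
Proof. by apply: eq_bigr => k _; rewrite mulrC. Qed.

Lemma dotvBl x y w : dotv (x - y) w = dotv x w - dotv y w.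
Proof. by rewrite /dotv -sumrB; apply: eq_bigr => k _; rewrite !mxE mulrBl. Qed.

Lemma dotvZl a x w : dotv (a *: x) w = a * dotv x w.
Proof. by rewrite /dotv mulr_sumr; apply: eq_bigr => k _; rewrite mxE mulrA. Qed.

Lemma dotvBr x y w : dotv w (x - y) = dotv w x - dotv w y.
Proof. by rewrite !(dotvC w) dotvBl. Qed.

Lemma dotvZr a x w : dotv w (a *: x) = a * dotv w x.
Proof. by rewrite !(dotvC w) dotvZl. Qed.

Lemma dotv_ge0 x : 0 <= dotv x x.
Proof. by apply: sumr_ge0 => k _; rewrite -expr2 sqr_ge0. Qed.

Lemma dotv_eq0 x : (dotv x x == 0) = (x == 0).
Proof.
apply/eqP/eqP => [x0 | ->]; last by apply: big1 => k _; rewrite mxE mul0r.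
apply/rowP => k; rewrite mxE; apply/eqP; rewrite -sqrf_eq0 expr2; apply/eqP.
by apply: (psumr_eq0P _ x0) => // j _; rewrite -expr2 sqr_ge0.
Qed.

Lemma orth_proj_uniq (W : 'rV[R]_d -> Prop) P Q :
  (forall u v, W u -> W v -> W (u - v)) ->
  is_orth_proj W P -> is_orth_proj W Q -> P =1 Q.
Proof.
move=> WB orthP orthQ x; have [WPx xPx] := orthP x; have [WQx xQx] := orthQ x.
have WPQ := WB _ _ WPx WQx.
have : dotv (P x - Q x) (P x - Q x) = 0.
  have {1}-> : P x - Q x = (x - Q x) - (x - P x) by symmetry; rewrite opprB addrC subrKA.
  by rewrite dotvBl xQx // xPx // subr0.
by move/eqP; rewrite dotv_eq0 subr_eq0 => /eqP.
Qed.

Definition perp_proj phi x := x - (dotv x phi / dotv phi phi) *: phi.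

Lemma perpB phi u v : perp phi u -> perp phi v -> perp phi (u - v).
Proof. by rewrite /perp dotvBl => -> ->; rewrite subr0. Qed.

Lemma perp_proj_orth phi : phi != 0 -> is_orth_proj (perp phi) (perp_proj phi).
Proof.
rewrite -dotv_eq0 => phi_neq0 x; split.
  by rewrite /perp dotvBl dotvZl divfK // subrr.
by move=> w; rewrite /perp /perp_proj opprB addrC subrK dotvZl dotvC => ->; rewrite mulr0.
Qed.

Lemma dotv_perp_proj phi x : phi != 0 ->
  dotv (perp_proj phi x) (perp_proj phi x) = dotv x x - dotv x phi ^+ 2 / dotv phi phi.
Proof.
rewrite -dotv_eq0 => phi_neq0.
rewrite /perp_proj !(dotvBl, dotvBr, dotvZl, dotvZr) (dotvC phi x).
by field.
Qed.

Definition qform A (v : 'rV[R]_d) : R := \sum_i \sum_j v 0 i * A i j * v 0 j.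

Lemma qform_outer_sub x y phi :
  qform (x^T *m x - y^T *m y) phi = dotv x phi ^+ 2 - dotv y phi ^+ 2.
Proof.
rewrite /qform /dotv !expr2 !big_distrlr -sumrB; apply: eq_bigr => i _.
rewrite -sumrB; apply: eq_bigr => j _.
by rewrite outer_subE /=; ring.
Qed.

Lemma trace_outer_sub x y : \tr (x^T *m x - y^T *m y) = dotv x x - dotv y y.
Proof.
by rewrite /mxtrace /dotv -sumrB; apply: eq_bigr => i _; rewrite outer_subE.
Qed.

Lemma orth_proj_perp_normv_eq phi P x y : phi != 0 -> is_orth_proj (perp phi) P ->
  normv (P x) = normv (P y) ->
  qform (x^T *m x - y^T *m y) phi = dotv phi phi * \tr (x^T *m x - y^T *m y).
Proof.
move=> phi_neq0 orthP; have PE := orth_proj_uniq (@perpB phi) orthP (perp_proj_orth phi_neq0).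
rewrite /normv !PE => /eqP; rewrite eqr_sqrt ?dotv_ge0 // !dotv_perp_proj // => /eqP eq_proj.
rewrite qform_outer_sub trace_outer_sub.
have -> : dotv x x - dotv y y = (dotv x phi ^+ 2 - dotv y phi ^+ 2) / dotv phi phi.
  by rewrite mulrBl; lra.
by rewrite mulrC divfK // dotv_eq0.
Qed.

End InnerProduct.

Section FiveVectors.
Variable R : realType.

Definition o0 : 'I_3 := @Ordinal 3 0 isT.
Definition o1 : 'I_3 := @Ordinal 3 1 isT.
Definition o2 : 'I_3 := @Ordinal 3 2 isT.

Lemma ord3P (i : 'I_3) : [\/ i = o0, i = o1 | i = o2].
Proof.
case: i => [[|[|[|//]]] lt_i3]; [constructor 1 | constructor 2 | constructor 3];
  exact: val_inj.
Qed.

Lemma sum_ord3 (F : 'I_3 -> R) : \sum_i F i = F o0 + F o1 + F o2.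
Proof.
rewrite !big_ord_recr big_ord0 /= add0r.
by congr (F _ + F _ + F _); apply: val_inj.
Qed.

Lemma dotv3 (x y : 'rV[R]_3) :
  dotv x y = x 0 o0 * y 0 o0 + x 0 o1 * y 0 o1 + x 0 o2 * y 0 o2.
Proof. exact: sum_ord3. Qed.

Definition vec3 (a b c : R) : 'rV[R]_3 := \row_j [:: a; b; c]`_j.

Definition phi5 (i : 'I_5) : 'rV[R]_3 :=
  [:: vec3 0 0 1; vec3 1 2 0; vec3 1 (-2) 0; vec3 1 2 1; vec3 1 (-2) 1]`_i.

Lemma phi5_neq0 i : phi5 i != 0.
Proof.
by case: i => [[|[|[|[|[|//]]]]] lt_i5]; rewrite -dotv_eq0 dotv3 !mxE /=; apply/eqP; lra.
Qed.

Lemma phi5_not_phase_retrieval : ~ vec_phase_retrieval phi5.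
Proof.
move=> /(_ (vec3 2 0 0) (vec3 0 1 0)) PR.
have : vec3 2 0 0 = vec3 0 1 0 \/ vec3 2 0 0 = - vec3 0 1 0.
  apply: PR => -[[|[|[|[|[|//]]]]] lt_i5];
  by rewrite !dotv3 !mxE /= !(mul0r, mulr0, mulr1, mul1r, addr0, add0r, normrN).
by case=> /rowP /(_ o0); rewrite !mxE /=; lra.
Qed.

Lemma phi5_qform_diag (A : 'M[R]_3) : A^T = A ->
  (forall i, qform A (phi5 i) = dotv (phi5 i) (phi5 i) * \tr A) ->
  A = \tr A *: diag_mx (vec3 (-5/3) (5/3) 1).
Proof.
move=> A_sym forms; have sym i j : A j i = A i j by rewrite -[in LHS]A_sym mxE.
have trE : \tr A = A o0 o0 + A o1 o1 + A o2 o2 by rewrite /mxtrace sum_ord3.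
have form k (lt_k5 : (k < 5)%N) := forms (Ordinal lt_k5).
have := form 0%N isT; have := form 1%N isT; have := form 2%N isT.
have := form 3%N isT; have := form 4%N isT.
rewrite /qform !sum_ord3 !dotv3 !mxE /= (sym o0 o1) (sym o0 o2) (sym o1 o2) => f4 f3 f2 f1 f0.
apply/matrixP => i j; rewrite !mxE.
case: (ord3P i) => ->; case: (ord3P j) => ->;
  by rewrite /= ?(sym o0 o1, sym o0 o2, sym o1 o2) ?mulr1n ?mulr0n; lra.
Qed.

Lemma phi5_hyperplanes_phase_retrieval :
  subspace_phase_retrieval (fun i => perp (phi5 i)).
Proof.
split; first by exists (fun i => perp_proj (phi5 i)) => i; apply/perp_proj_orth/phi5_neq0.
move=> P orthP x y normsE; apply: outer_row_inj.
set A := x^T *m x - y^T *m y.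
have A_sym : A^T = A by rewrite /A raddfB /= !trmx_mul !trmxK.
have A_diag := phi5_qform_diag A_sym
  (fun i => orth_proj_perp_normv_eq (phi5_neq0 i) (orthP i) (normsE i)).
have trA0 : \tr A = 0.
  have := det_outer_sub x y; rewrite -/A {1}A_diag detZ det_diag.
  rewrite !big_ord_recr big_ord0 /= !mxE /= => /eqP.
  by rewrite mulf_eq0 expf_eq0 /= => /orP[/eqP // | /eqP]; lra.
by apply/eqP; rewrite -subr_eq0 -/A A_diag trA0 scale0r.
Qed.

End FiveVectors.

Theorem mainTheorem6 (R : realType) :
  exists phi : 'I_5 -> 'rV[R]_3,
    (forall i, phi i != 0) /\
    ~ vec_phase_retrieval phi /\
    subspace_phase_retrieval (fun i => perp (phi i)).
Proof.
exists (@phi5 R); split; first exact: phi5_neq0.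
split; [exact: phi5_not_phase_retrieval | exact: phi5_hyperplanes_phase_retrieval].
Qed.
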